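(* Let $A$ and $B$ be rings, $f: A\to B$ a ring homomorphism and $J$ a proper ideal of $B$ such that $f^{-1}(J)\subseteq\mathrm{nil}(A)$. If $f(A)+J$ is a weak Armendariz ring, then $A\bowtie^{f}J$ is a weak Armendariz ring.
   Context: All rings are associative with identity (not necessarily commutative), ring homomorphisms are unital, and ideals are two-sided. $\mathrm{nil}(R)$ denotes the set of nilpotent elements of a ring $R$. For a ring homomorphism $f:A\to B$ and an ideal $J$ of $B$, the amalgamation is the subring $A\bowtie^{f}J=\{(a,f(a)+j)\mid a\in A,\ j\in J\}$ of $A\times B$; $f(A)+J=\{f(a)+j: a\in A, j\in J\}$ is a subring of $B$. A ring $R$ is weak Armendariz if whenever $p(x)=\sum_{i=0}^n a_ix^i$ and $q(x)=\sum_{j=0}^m b_jx^j$ in $R[x]$ satisfy $p(x)q(x)=0$, then $a_ib_j\in\mathrm{nil}(R)$ for all $i,j$. *)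

From HB Require Import structures.
From mathcomp Require Import all_boot all_order all_algebra.
Set Implicit Arguments. Unset Strict Implicit. Unset Printing Implicit Defensive.
Import GRing.Theory.
Local Open Scope ring_scope.

Definition is_nilpotent (R : nzRingType) (x : R) : Prop := exists n : nat, x ^+ n = 0.

Definition proper_two_sided_ideal (B : nzRingType) (J : B -> Prop) : Prop :=
  [/\ J 0,
      (forall x y, J x -> J y -> J (x - y)),
      (forall a x, J x -> J (a * x) /\ J (x * a))
    & ~ J 1].

(* Since S is a subring of R,
   polynomial multiplication and nilpotency in S agree with those in R. *)
Definition weak_armendariz_on (R : nzRingType) (S : R -> Prop) : Prop :=
  forall p q : {poly R},
    (forall i, S p`_i) -> (forall i, S q`_i) -> p * q = 0 ->
    forall i j, is_nilpotent (p`_i * q`_j).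

Definition fA_plus_J (A B : nzRingType) (f : {rmorphism A -> B}) (J : B -> Prop)
  : B -> Prop := fun b => exists a j, J j /\ b = f a + j.

Definition amalgamation (A B : nzRingType) (f : {rmorphism A -> B}) (J : B -> Prop)
  : (A * B)%type -> Prop := fun x => exists a j, J j /\ x = (a, f a + j).

From HB Require Import structures.
From mathcomp Require Import all_boot all_order all_algebra.
Set Implicit Arguments. Unset Strict Implicit. Unset Printing Implicit Defensive.
Import GRing.Theory.
Local Open Scope ring_scope.

(* Both projections of A |><|^f J are ring morphisms whose images of the
   coefficients land in f(A) + J (for the first one, after composing with f),
   so weak Armendariz-ness of f(A) + J makes both components of a_i b_j
   nilpotent; the hypothesis f^-1(J) <= nil(A) pulls the first component back
   from B to A. *)

Lemma is_nilpotentX (R : nzRingType) (x : R) (n : nat) :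
  is_nilpotent (x ^+ n) -> is_nilpotent x.
Proof. by move=> [m Hm]; exists (n * m)%N; rewrite exprM. Qed.

Lemma is_nilpotent_pair (A B : nzRingType) (x : A) (y : B) :
  is_nilpotent x -> is_nilpotent y -> is_nilpotent ((x, y) : A * B).
Proof.
move=> [n Hn] [m Hm]; exists (n + m)%N.
have pairX k : ((x, y) : A * B) ^+ k = (x ^+ k, y ^+ k).
  by elim: k => [|k IH] //; rewrite !exprS IH.
by rewrite pairX exprD Hn mul0r exprD Hm mulr0.
Qed.

Lemma weak_armendariz_on_rmorph (R T : nzRingType) (S : T -> Prop)
    (g : {rmorphism R -> T}) (p q : {poly R}) :
  weak_armendariz_on S ->
  (forall i, S (g p`_i)) -> (forall i, S (g q`_i)) -> p * q = 0 ->
  forall i j, is_nilpotent (g (p`_i * q`_j)).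
Proof.
move=> hwa Sp Sq pq0 i j.
have gpq0 : map_poly g p * map_poly g q = 0 by rewrite -rmorphM pq0 rmorph0.
have := hwa _ _ _ _ gpq0 i j; rewrite !coef_map rmorphM; apply.
- by move=> k; rewrite coef_map; apply: Sp.
- by move=> k; rewrite coef_map; apply: Sq.
Qed.

Lemma is_nilpotent_of_rmorph (A B : nzRingType) (f : {rmorphism A -> B}) (a : A) :
  (forall a : A, f a = 0 -> is_nilpotent a) ->
  is_nilpotent (f a) -> is_nilpotent a.
Proof.
move=> ker_nil [n fan0]; apply: (is_nilpotentX (n := n)).
by apply: ker_nil; rewrite rmorphXn.
Qed.

Theorem theorem4p1 (A B : nzRingType) (f : {rmorphism A -> B}) (J : B -> Prop)
  (hJ : proper_two_sided_ideal J)
  (hpre : forall a : A, J (f a) -> is_nilpotent a)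
  (hwa : weak_armendariz_on (fA_plus_J f J)) :
  weak_armendariz_on (amalgamation f J).
Proof.
case: hJ => J0 _ _ _ p q Hp Hq pq0 i j.
have fst_in (r : {poly A * B}) k : fA_plus_J f J ((f \o fst) r`_k).
  by exists (r`_k).1, 0; rewrite addr0.
have snd_in (r : {poly A * B}) :
    (forall k, amalgamation f J r`_k) -> forall k, fA_plus_J f J (snd r`_k).
  by move=> Hr k; have [a [b [Jb ->]]] := Hr k; exists a, b.
have ker_nil (a : A) : f a = 0 -> is_nilpotent a.
  by move=> fa0; apply: hpre; rewrite fa0.
have N1 : is_nilpotent ((p`_i * q`_j).1).
  apply: is_nilpotent_of_rmorph ker_nil _.
  exact: (weak_armendariz_on_rmorph (g := f \o fst : {rmorphism _ -> _}) hwa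
           (fst_in p) (fst_in q) pq0).
have N2 : is_nilpotent ((p`_i * q`_j).2).
  exact: (weak_armendariz_on_rmorph (g := snd) hwa (snd_in p Hp) (snd_in q Hq) pq0).
by case: (p`_i * q`_j) N1 N2 => x y; apply: is_nilpotent_pair.
Qed.
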